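(* Let $(\mathcal{C},\otimes,I)$ be a monoidal category with finite products (binary product $\times$, terminal object $1$) and let $!$ be a linear exponential comonad on $\mathcal{C}$. Then there is a natural isomorphism $!X\otimes!Y\cong!(X\times Y)$ and an isomorphism $I\cong!1$ making $!$ a strong monoidal functor from $(\mathcal{C},\times,1)$ to $(\mathcal{C},\otimes,I)$.
   Context: Monoidal functors are lax: a functor $F$ with a morphism $m_I:I\to FI$ and a natural transformation $m_{X,Y}:FX\otimes FY\to F(X\otimes Y)$ satisfying the usual coherence; strong if these are invertible. Associators and unitors are suppressed below. A linear exponential comonad on a monoidal category $(\mathcal{C},\otimes,I)$ is a monoidal comonad $(!,\delta,\varepsilon,m,m_I)$ (i.e. a comonad $(!,\delta:!\Rightarrow!!,\varepsilon:!\Rightarrow\mathrm{Id})$ with $!$ a lax monoidal functor with structure $m_{X,Y}:!X\otimes!Y\to!(X\otimes Y)$, $m_I:I\to!I$, and $\delta,\varepsilon$ monoidal natural transformations), equipped with a monoidal natural transformation $e_X:!X\to I$ (i.e. natural, with $e_{X\otimes Y}\circ m_{X,Y}=e_X\otimes e_Y$ and $e_I\circ m_I=id_I$) and a natural transformation $d_X:!X\to!X\otimes!X$ such that, defining $$\sigma_{X,Y}=(\varepsilon_{!Y}\otimes\varepsilon_{!X})\circ(!(e_X\otimes id)\otimes!(id\otimes e_Y))\circ d_{!X\otimes!Y}\circ m_{!X,!Y}\circ(\delta_X\otimes\delta_Y):!X\otimes!Y\to!Y\otimes!X,$$ the following hold for all $X,Y,Z$: (1) the two morphisms $!X\otimes!X\otimes!Y\otimes!Y\otimes!Z\otimes!Z\to!(X\otimes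 Y\otimes Z)\otimes!(X\otimes Y\otimes Z)$ given by $(m_{X\otimes Y,Z}\otimes m_{X\otimes Y,Z})\circ(id\otimes\sigma_{X\otimes Y,Z}\otimes id)\circ(m_{X,Y}\otimes m_{X,Y}\otimes id\otimes id)\circ(id\otimes\sigma_{X,Y}\otimes id\otimes id\otimes id)$ and $(m_{X,Y\otimes Z}\otimes m_{X,Y\otimes Z})\circ(id\otimes\sigma_{X,Y\otimes Z}\otimes id)\circ(id\otimes id\otimes m_{Y,Z}\otimes m_{Y,Z})\circ(id\otimes id\otimes id\otimes\sigma_{Y,Z}\otimes id)$ are equal; (2) $m_{!Y,!X}\circ\sigma_{!X,!Y}=!\sigma_{X,Y}\circ m_{!X,!Y}$; (3) $\sigma_{X,Y}$ is invertible with $\sigma_{X,Y}^{-1}=\sigma_{Y,X}$; (4) $(\sigma_{X,Z}\otimes id_{!Y})\circ(id_{!X}\otimes\sigma_{Y,Z})=(id_{!Z}\otimes\varepsilon_{!X\otimes!Y})\circ\sigma_{!X\otimes!Y,Z}\circ(m_{!X,!Y}\otimes id_{!Z})\circ(\delta_X\otimes\delta_Y\otimes id_{!Z})$; (5) $d_{X\otimes Y}\circ m_{X,Y}=(m_{X,Y}\otimes m_{X,Y})\circ(id_{!X}\otimes\sigma_{X,Y}\otimes id_{!Y})\circ(d_X\otimes d_Y)$ and $d_I\circ m_I=m_I\otimes m_I$; (6) $(!X,d_X,e_X)$ is a comonoid in $\mathcal{C}$; (7) $e_X$ is a coalgebra morphism from $(!X,\delta_X)$ to $(I,m_I)$, i.e.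 $m_I\circ e_X=!e_X\circ\delta_X$, and $d_X$ is a coalgebra morphism from $(!X,\delta_X)$ to $(!X\otimes!X,m_{!X,!X}\circ(\delta_X\otimes\delta_X))$, i.e. $m_{!X,!X}\circ(\delta_X\otimes\delta_X)\circ d_X=!d_X\circ\delta_X$; (8) $\delta_X$ is a comonoid morphism from $(!X,d_X,e_X)$ to $(!!X,d_{!X},e_{!X})$, i.e. $d_{!X}\circ\delta_X=(\delta_X\otimes\delta_X)\circ d_X$ and $e_{!X}\circ\delta_X=e_X$. *)

Set Implicit Arguments.
Unset Strict Implicit.
Set Universe Polymorphism.

Record Category := {
  ob :> Type;
  hom : ob -> ob -> Type;
  idm : forall X, hom X X;
  comp : forall X Y Z, hom Y Z -> hom X Y -> hom X Z;
  comp_idl : forall X Y (f : hom X Y), comp (idm Y) f = f;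
  comp_idr : forall X Y (f : hom X Y), comp f (idm X) = f;
  comp_assoc : forall X Y Z W (f : hom X Y) (g : hom Y Z) (h : hom Z W),
      comp h (comp g f) = comp (comp h g) f
}.
Arguments hom {C} X Y : rename.
Arguments idm {C} X : rename.
Arguments comp {C X Y Z} g f : rename.

Notation "g ∘ f" := (comp g f) (at level 40, left associativity).

Definition is_inverse (C : Category) (X Y : C) (f : hom X Y) (g : hom Y X) : Prop :=
  g ∘ f = idm X /\ f ∘ g = idm Y.
Arguments is_inverse {C X Y} f g.

Definition is_iso (C : Category) (X Y : C) (f : hom X Y) : Prop :=
  exists g : hom Y X, is_inverse f g.
Arguments is_iso {C X Y} f.

Record MonoidalData (C : Category) := {
  tens : C -> C -> C;
  tensm : forall X X' Y Y', hom X X' -> hom Y Y' -> hom (tens X Y) (tens X' Y');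
  munit : C;
  assoc : forall X Y Z, hom (tens (tens X Y) Z) (tens X (tens Y Z));
  assoc_inv : forall X Y Z, hom (tens X (tens Y Z)) (tens (tens X Y) Z);
  lunit : forall X, hom (tens munit X) X;
  lunit_inv : forall X, hom X (tens munit X);
  runit : forall X, hom (tens X munit) X;
  runit_inv : forall X, hom X (tens X munit)
}.
Arguments tens {C} M X Y : rename.
Arguments tensm {C} M {X X' Y Y'} f g : rename.
Arguments munit {C} M : rename.
Arguments assoc {C} M X Y Z : rename.
Arguments assoc_inv {C} M X Y Z : rename.
Arguments lunit {C} M X : rename.
Arguments lunit_inv {C} M X : rename.
Arguments runit {C} M X : rename.
Arguments runit_inv {C} M X : rename.

Record is_monoidal (C : Category) (M : MonoidalData C) : Prop := {
  tens_id : forall X Y, tensm M (idm X) (idm Y) = idm (tens M X Y);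
  tens_comp : forall X X' X'' Y Y' Y''
      (f : hom X X') (f' : hom X' X'') (g : hom Y Y') (g' : hom Y' Y''),
      tensm M (f' ∘ f) (g' ∘ g) = tensm M f' g' ∘ tensm M f g;
  assoc_iso : forall X Y Z, is_inverse (assoc M X Y Z) (assoc_inv M X Y Z);
  assoc_nat : forall X X' Y Y' Z Z' (f : hom X X') (g : hom Y Y') (h : hom Z Z'),
      assoc M X' Y' Z' ∘ tensm M (tensm M f g) h
      = tensm M f (tensm M g h) ∘ assoc M X Y Z;
  lunit_iso : forall X, is_inverse (lunit M X) (lunit_inv M X);
  lunit_nat : forall X Y (f : hom X Y),
      lunit M Y ∘ tensm M (idm (munit M)) f = f ∘ lunit M X;
  runit_iso : forall X, is_inverse (runit M X) (runit_inv M X);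
  runit_nat : forall X Y (f : hom X Y),
      runit M Y ∘ tensm M f (idm (munit M)) = f ∘ runit M X;
  pentagon : forall W X Y Z,
      assoc M W X (tens M Y Z) ∘ assoc M (tens M W X) Y Z
      = tensm M (idm W) (assoc M X Y Z) ∘ assoc M W (tens M X Y) Z
        ∘ tensm M (assoc M W X Y) (idm Z);
  triangle : forall X Y,
      tensm M (idm X) (lunit M Y) ∘ assoc M X (munit M) Y
      = tensm M (runit M X) (idm Y)
}.
Arguments is_monoidal {C} M.

Record Products (C : Category) := {
  prod : C -> C -> C;
  p1 : forall X Y, hom (prod X Y) X;
  p2 : forall X Y, hom (prod X Y) Y;
  pair : forall Z X Y, hom Z X -> hom Z Y -> hom Z (prod X Y);
  p1_pair : forall Z X Y (f : hom Z X) (g : hom Z Y), p1 X Y ∘ pair f g = f;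
  p2_pair : forall Z X Y (f : hom Z X) (g : hom Z Y), p2 X Y ∘ pair f g = g;
  pair_eta : forall Z X Y (h : hom Z (prod X Y)), pair (p1 X Y ∘ h) (p2 X Y ∘ h) = h;
  term : C;
  bang : forall X, hom X term;
  bang_uniq : forall X (f : hom X term), f = bang X
}.
Arguments prod {C} P X Y : rename.
Arguments p1 {C} P X Y : rename.
Arguments p2 {C} P X Y : rename.
Arguments pair {C} P {Z X Y} f g : rename.
Arguments term {C} P : rename.
Arguments bang {C} P X : rename.

Definition cartesian (C : Category) (P : Products C) : MonoidalData C := {|
  tens := prod P;
  tensm := fun X X' Y Y' f g => pair P (f ∘ p1 P X Y) (g ∘ p2 P X Y);
  munit := term P;
  assoc := fun X Y Z =>
    pair P (p1 P X Y ∘ p1 P (prod P X Y) Z)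
           (pair P (p2 P X Y ∘ p1 P (prod P X Y) Z) (p2 P (prod P X Y) Z));
  assoc_inv := fun X Y Z =>
    pair P (pair P (p1 P X (prod P Y Z)) (p1 P Y Z ∘ p2 P X (prod P Y Z)))
           (p2 P Y Z ∘ p2 P X (prod P Y Z));
  lunit := fun X => p2 P (term P) X;
  lunit_inv := fun X => pair P (bang P X) (idm X);
  runit := fun X => p1 P X (term P);
  runit_inv := fun X => pair P (idm X) (bang P X)
|}.
Arguments cartesian {C} P.

Record Functor (C : Category) := {
  fob :> C -> C;
  fhom : forall X Y, hom X Y -> hom (fob X) (fob Y);
  fhom_id : forall X, fhom (idm X) = idm (fob X);
  fhom_comp : forall X Y Z (f : hom X Y) (g : hom Y Z),
      fhom (g ∘ f) = fhom g ∘ fhom f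
}.
Arguments fhom {C} F {X Y} f : rename.

Record is_lax_monoidal (C : Category) (S T : MonoidalData C) (F : Functor C)
    (m : forall X Y, hom (tens T (F X) (F Y)) (F (tens S X Y)))
    (mI : hom (munit T) (F (munit S))) : Prop := {
  lax_nat : forall X X' Y Y' (f : hom X X') (g : hom Y Y'),
      fhom F (tensm S f g) ∘ m X Y = m X' Y' ∘ tensm T (fhom F f) (fhom F g);
  lax_assoc : forall X Y Z,
      fhom F (assoc S X Y Z) ∘ m (tens S X Y) Z ∘ tensm T (m X Y) (idm (F Z))
      = m X (tens S Y Z) ∘ tensm T (idm (F X)) (m Y Z) ∘ assoc T (F X) (F Y) (F Z);
  lax_lunit : forall X,
      fhom F (lunit S X) ∘ m (munit S) X ∘ tensm T mI (idm (F X)) = lunit T (F X);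
  lax_runit : forall X,
      fhom F (runit S X) ∘ m X (munit S) ∘ tensm T (idm (F X)) mI = runit T (F X)
}.
Arguments is_lax_monoidal {C} S T F m mI.

Definition is_strong_monoidal (C : Category) (S T : MonoidalData C) (F : Functor C)
    (m : forall X Y, hom (tens T (F X) (F Y)) (F (tens S X Y)))
    (mI : hom (munit T) (F (munit S))) : Prop :=
  is_lax_monoidal S T F m mI /\ (forall X Y, is_iso (m X Y)) /\ is_iso mI.
Arguments is_strong_monoidal {C} S T F m mI.

(* Rebracketing helpers for right-nested tensors (the paper suppresses
   associators; we insert the canonical ones). *)

Definition pre2 (C : Category) (M : MonoidalData C) (B Cc B' C' R : C)
    (f : hom (tens M B Cc) (tens M B' C')) :
    hom (tens M B (tens M Cc R)) (tens M B' (tens M C' R)) :=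
  assoc M B' C' R ∘ tensm M f (idm R) ∘ assoc_inv M B Cc R.
Arguments pre2 {C} M {B Cc B' C'} R f.

Definition gr2 (C : Category) (M : MonoidalData C) (A B D R : C)
    (f : hom (tens M A B) D) : hom (tens M A (tens M B R)) (tens M D R) :=
  tensm M f (idm R) ∘ assoc_inv M A B R.
Arguments gr2 {C} M {A B D} R f.

Definition pairm (C : Category) (M : MonoidalData C) (A B D A' B' D' : C)
    (f : hom (tens M A B) D) (g : hom (tens M A' B') D') :
    hom (tens M A (tens M B (tens M A' B'))) (tens M D D') :=
  tensm M f g ∘ assoc_inv M A B (tens M A' B').
Arguments pairm {C} M {A B D A' B' D'} f g.

Record LECData (C : Category) (M : MonoidalData C) := {
  bang_f : Functor C;
  delta : forall X, hom (bang_f X) (bang_f (bang_f X));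
  eps : forall X, hom (bang_f X) X;
  mm : forall X Y, hom (tens M (bang_f X) (bang_f Y)) (bang_f (tens M X Y));
  mI : hom (munit M) (bang_f (munit M));
  ee : forall X, hom (bang_f X) (munit M);
  dd : forall X, hom (bang_f X) (tens M (bang_f X) (bang_f X))
}.
Arguments bang_f {C M} L : rename.
Arguments delta {C M} L X : rename.
Arguments eps {C M} L X : rename.
Arguments mm {C M} L X Y : rename.
Arguments mI {C M} L : rename.
Arguments ee {C M} L X : rename.
Arguments dd {C M} L X : rename.

Definition sigma (C : Category) (M : MonoidalData C) (L : LECData M) (X Y : C) :
    hom (tens M (bang_f L X) (bang_f L Y)) (tens M (bang_f L Y) (bang_f L X)) :=
  let B := bang_f L in
  tensm M (eps L (B Y)) (eps L (B X))
  ∘ tensm M (fhom B (lunit M (B Y) ∘ tensm M (ee L X) (idm (B Y))))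
            (fhom B (runit M (B X) ∘ tensm M (idm (B X)) (ee L Y)))
  ∘ dd L (tens M (B X) (B Y))
  ∘ mm L (B X) (B Y)
  ∘ tensm M (delta L X) (delta L Y).
Arguments sigma {C M} L X Y.

Record is_linear_exponential_comonad (C : Category) (M : MonoidalData C)
    (L : LECData M) : Prop := {
  delta_nat : forall X Y (f : hom X Y),
      delta L Y ∘ fhom (bang_f L) f = fhom (bang_f L) (fhom (bang_f L) f) ∘ delta L X;
  eps_nat : forall X Y (f : hom X Y), eps L Y ∘ fhom (bang_f L) f = f ∘ eps L X;
  comonad_counit_l : forall X, eps L (bang_f L X) ∘ delta L X = idm (bang_f L X);
  comonad_counit_r : forall X, fhom (bang_f L) (eps L X) ∘ delta L X = idm (bang_f L X);
  comonad_coassoc : forall X,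
      delta L (bang_f L X) ∘ delta L X = fhom (bang_f L) (delta L X) ∘ delta L X;
  bang_lax : is_lax_monoidal M M (bang_f L) (mm L) (mI L);
  delta_mon : forall X Y,
      delta L (tens M X Y) ∘ mm L X Y
      = fhom (bang_f L) (mm L X Y) ∘ mm L (bang_f L X) (bang_f L Y)
        ∘ tensm M (delta L X) (delta L Y);
  delta_mon_unit : delta L (munit M) ∘ mI L = fhom (bang_f L) (mI L) ∘ mI L;
  eps_mon : forall X Y, eps L (tens M X Y) ∘ mm L X Y = tensm M (eps L X) (eps L Y);
  eps_mon_unit : eps L (munit M) ∘ mI L = idm (munit M);
  e_nat : forall X Y (f : hom X Y), ee L Y ∘ fhom (bang_f L) f = ee L X;
  e_mon : forall X Y,
      ee L (tens M X Y) ∘ mm L X Y = lunit M (munit M) ∘ tensm M (ee L X) (ee L Y);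
  e_mon_unit : ee L (munit M) ∘ mI L = idm (munit M);
  d_nat : forall X Y (f : hom X Y),
      dd L Y ∘ fhom (bang_f L) f
      = tensm M (fhom (bang_f L) f) (fhom (bang_f L) f) ∘ dd L X;
  ax1 : forall X Y Z,
      let B := bang_f L in
      let m := mm L in
      let s := sigma L in
      let XY := tens M X Y in
      let YZ := tens M Y Z in
      tensm M (fhom B (assoc M X Y Z)) (fhom B (assoc M X Y Z))
      ∘ pairm M (m XY Z) (m XY Z)
      ∘ tensm M (idm (B XY)) (pre2 M (B Z) (s XY Z))
      ∘ gr2 M (tens M (B XY) (tens M (B Z) (B Z))) (m X Y)
      ∘ tensm M (idm (B X)) (tensm M (idm (B Y)) (gr2 M (tens M (B Z) (B Z)) (m X Y)))
      ∘ tensm M (idm (B X)) (pre2 M (tens M (B Y) (tens M (B Z) (B Z))) (s X Y))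
      = pairm M (m X YZ) (m X YZ)
        ∘ tensm M (idm (B X)) (pre2 M (B YZ) (s X YZ))
        ∘ tensm M (idm (B X)) (tensm M (idm (B X)) (pairm M (m Y Z) (m Y Z)))
        ∘ tensm M (idm (B X)) (tensm M (idm (B X))
            (tensm M (idm (B Y)) (pre2 M (B Z) (s Y Z))));
  ax2 : forall X Y,
      mm L (bang_f L Y) (bang_f L X) ∘ sigma L (bang_f L X) (bang_f L Y)
      = fhom (bang_f L) (sigma L X Y) ∘ mm L (bang_f L X) (bang_f L Y);
  ax3 : forall X Y, is_inverse (sigma L X Y) (sigma L Y X);
  ax4 : forall X Y Z,
      let B := bang_f L in
      pre2 M (B Y) (sigma L X Z) ∘ tensm M (idm (B X)) (sigma L Y Z)
      = tensm M (idm (B Z)) (eps L (tens M (B X) (B Y)))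
        ∘ sigma L (tens M (B X) (B Y)) Z
        ∘ gr2 M (B Z) (mm L (B X) (B Y))
        ∘ tensm M (delta L X) (tensm M (delta L Y) (idm (B Z)));
  ax5 : forall X Y,
      let B := bang_f L in
      dd L (tens M X Y) ∘ mm L X Y
      = pairm M (mm L X Y) (mm L X Y)
        ∘ tensm M (idm (B X)) (pre2 M (B Y) (sigma L X Y))
        ∘ assoc M (B X) (B X) (tens M (B Y) (B Y))
        ∘ tensm M (dd L X) (dd L Y);
  ax5_unit : dd L (munit M) ∘ mI L = tensm M (mI L) (mI L) ∘ lunit_inv M (munit M);
  comonoid_coassoc : forall X,
      let B := bang_f L in
      tensm M (dd L X) (idm (B X)) ∘ dd L X
      = assoc_inv M (B X) (B X) (B X) ∘ tensm M (idm (B X)) (dd L X) ∘ dd L X;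
  comonoid_counit_l : forall X,
      lunit M (bang_f L X) ∘ tensm M (ee L X) (idm (bang_f L X)) ∘ dd L X
      = idm (bang_f L X);
  comonoid_counit_r : forall X,
      runit M (bang_f L X) ∘ tensm M (idm (bang_f L X)) (ee L X) ∘ dd L X
      = idm (bang_f L X);
  ax7_e : forall X, mI L ∘ ee L X = fhom (bang_f L) (ee L X) ∘ delta L X;
  ax7_d : forall X,
      mm L (bang_f L X) (bang_f L X) ∘ tensm M (delta L X) (delta L X) ∘ dd L X
      = fhom (bang_f L) (dd L X) ∘ delta L X;
  ax8_d : forall X,
      dd L (bang_f L X) ∘ delta L X = tensm M (delta L X) (delta L X) ∘ dd L X;
  ax8_e : forall X, ee L (bang_f L X) ∘ delta L X = ee L X
}.
Arguments is_linear_exponential_comonad {C M} L.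

(* The Seely isomorphism [!X (x) !Y -> !(X x Y)] is the promotion
   [!h o m o (delta (x) delta)] of the map [h = <eps o weakening, eps o weakening>
   : !X (x) !Y -> X x Y]; its inverse is [(!pi1 (x) !pi2) o d].  That the
   composite [!(X x Y) -> !(X x Y)] is the identity uses that [d] is a coalgebra
   morphism (7) and that [h] recovers [eps]; the other composite unfolds [d]
   on a promotion by (5) and (8), and collapses by the counit laws of the
   comonoid [!X] once one knows that [sigma] commutes with [e].  The unit
   isomorphism [I -> !1] is [!(bang) o m_I], with inverse [e_1].  Finally, the
   inverse [(!pi1 (x) !pi2) o d] is visibly oplax monoidal, by coassociativity
   and counitality of [d], and the inverse of an invertible oplax structure is
   lax. *)


Lemma chain_rewrite2 {C : Category} {X Y Z W : C} {g : hom Y Z} {f : hom X Y}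
  {k : hom X Z} (E : g ∘ f = k) (r : hom W X) : g ∘ (f ∘ r) = k ∘ r.
Proof. rewrite comp_assoc, E; reflexivity. Qed.

Lemma chain_rewrite3 {C : Category} {X Y Z V W : C} {a : hom X Y} {b : hom Y Z}
  {c : hom Z V} {k : hom X V} (E : c ∘ (b ∘ a) = k) (r : hom W X) :
  c ∘ (b ∘ (a ∘ r)) = k ∘ r.
Proof. rewrite <- E, !comp_assoc; reflexivity. Qed.

(* Goals are kept as right-nested composites.  [rw H] instantiates the
   (universally quantified) equation [H], right-nests both sides, and rewrites
   with it, also when its left-hand side is only a prefix of a composite in
   the goal; [rwl H] does the same from right to left. *)
Ltac assocr := repeat rewrite <- comp_assoc.
Ltac assocr_in E := repeat rewrite <- comp_assoc in E.
Ltac chain_rewrite E :=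
  first [ rewrite E | rewrite (chain_rewrite2 E) | rewrite (chain_rewrite3 E) ].
Ltac specialize_all E := repeat lazymatch type of E with
  | forall _ : _, _ =>
      let E' := fresh "E'" in epose proof (E _) as E'; clear E; rename E' into E
  end; cbv zeta in E.
Ltac rw H := let E := fresh "E" in
  epose proof H as E; specialize_all E; assocr_in E; chain_rewrite E; clear E; assocr.
Ltac rwl H := let E := fresh "E" in
  epose proof H as E; specialize_all E; apply eq_sym in E; assocr_in E;
  chain_rewrite E; clear E; assocr.
Ltac clean := repeat rewrite ?comp_idl, ?comp_idr, ?fhom_id.

Lemma prod_hom_ext (C : Category) (P : Products C) (Z X Y : C) (f g : hom Z (prod P X Y)) :
  p1 P X Y ∘ f = p1 P X Y ∘ g -> p2 P X Y ∘ f = p2 P X Y ∘ g -> f = g.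
Proof. intros H1 H2. rewrite <- (pair_eta f), <- (pair_eta g), H1, H2. reflexivity. Qed.

Section MonoidalFacts.
Context {C : Category} {M : MonoidalData C} (HM : is_monoidal M).

Lemma tensm_split_lr X X' Y Y' (f : hom X X') (g : hom Y Y') :
  tensm M f g = tensm M f (idm Y') ∘ tensm M (idm X) g.
Proof. rewrite <- (tens_comp HM), comp_idl, comp_idr; reflexivity. Qed.

Lemma tensm_split_rl X X' Y Y' (f : hom X X') (g : hom Y Y') :
  tensm M f g = tensm M (idm X') g ∘ tensm M f (idm Y).
Proof. rewrite <- (tens_comp HM), comp_idl, comp_idr; reflexivity. Qed.

Lemma tensm_compr X X' Y Y' Y'' (f : hom X X') (g : hom Y' Y'') (h : hom Y Y') :
  tensm M f (g ∘ h) = tensm M f g ∘ tensm M (idm X) h.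
Proof. rewrite <- (tens_comp HM), comp_idr; reflexivity. Qed.

Lemma tensm_compl X X' X'' Y Y' (f : hom X' X'') (g : hom X X') (h : hom Y Y') :
  tensm M (f ∘ g) h = tensm M f h ∘ tensm M g (idm Y).
Proof. rewrite <- (tens_comp HM), comp_idr; reflexivity. Qed.

Lemma assoc_inv_assoc X Y Z : assoc_inv M X Y Z ∘ assoc M X Y Z = idm _.
Proof. apply (assoc_iso HM). Qed.

Lemma assoc_assoc_inv X Y Z : assoc M X Y Z ∘ assoc_inv M X Y Z = idm _.
Proof. apply (assoc_iso HM). Qed.

Lemma assoc_inv_nat X X' Y Y' Z Z' (f : hom X X') (g : hom Y Y') (h : hom Z Z') :
  assoc_inv M X' Y' Z' ∘ tensm M f (tensm M g h)
  = tensm M (tensm M f g) h ∘ assoc_inv M X Y Z.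
Proof.
  transitivity (assoc_inv M X' Y' Z' ∘ tensm M f (tensm M g h)
                ∘ (assoc M X Y Z ∘ assoc_inv M X Y Z)).
  { rewrite assoc_assoc_inv, comp_idr; reflexivity. }
  assocr. rwl (assoc_nat HM). rw assoc_inv_assoc. clean. reflexivity.
Qed.

End MonoidalFacts.

Section LaxOfInverseOplax.
Context {C : Category} (S T : MonoidalData C) (HT : is_monoidal T) (F : Functor C)
  (m : forall X Y, hom (tens T (F X) (F Y)) (F (tens S X Y)))
  (n : forall X Y, hom (F (tens S X Y)) (tens T (F X) (F Y)))
  (mI : hom (munit T) (F (munit S))) (nI : hom (F (munit S)) (munit T)).

Hypothesis n_m : forall X Y, n X Y ∘ m X Y = idm _.
Hypothesis m_n : forall X Y, m X Y ∘ n X Y = idm _.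
Hypothesis nI_mI : nI ∘ mI = idm _.
Hypothesis n_nat : forall X X' Y Y' (f : hom X X') (g : hom Y Y'),
  n X' Y' ∘ fhom F (tensm S f g) = tensm T (fhom F f) (fhom F g) ∘ n X Y.
Hypothesis n_assoc : forall X Y Z,
  tensm T (idm _) (n Y Z) ∘ n X (tens S Y Z) ∘ fhom F (assoc S X Y Z)
  = assoc T (F X) (F Y) (F Z) ∘ tensm T (n X Y) (idm _) ∘ n (tens S X Y) Z.
Hypothesis n_lunit : forall X,
  lunit T (F X) ∘ tensm T nI (idm _) ∘ n (munit S) X = fhom F (lunit S X).
Hypothesis n_runit : forall X,
  runit T (F X) ∘ tensm T (idm _) nI ∘ n X (munit S) = fhom F (runit S X).

Ltac merge := repeat (rwl (tens_comp HT)).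

Lemma inverse_oplax_is_lax : is_lax_monoidal S T F m mI.
Proof.
  split.
  - intros X X' Y Y' f g.
    transitivity (m X' Y' ∘ (n X' Y' ∘ (fhom F (tensm S f g) ∘ m X Y))).
    { rw m_n. clean. reflexivity. }
    rw n_nat. rw n_m. clean. reflexivity.
  - intros X Y Z. symmetry.
    transitivity (m X (tens S Y Z) ∘ (tensm T (idm _) (m Y Z)
      ∘ (tensm T (idm _) (n Y Z) ∘ (n X (tens S Y Z) ∘ (fhom F (assoc S X Y Z)
      ∘ (m (tens S X Y) Z ∘ tensm T (m X Y) (idm _))))))).
    2: { merge. rw m_n. clean. rewrite (tens_id HT). clean. rw m_n. clean. reflexivity. }
    rw n_assoc. rw n_m. clean. merge. rw n_m. clean. rewrite (tens_id HT). clean.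
    reflexivity.
  - intros X. rewrite <- n_lunit. assocr. rw n_m. clean. merge. rw nI_mI. clean.
    rewrite (tens_id HT). clean. reflexivity.
  - intros X. rewrite <- n_runit. assocr. rw n_m. clean. merge. rw nI_mI. clean.
    rewrite (tens_id HT). clean. reflexivity.
Qed.

End LaxOfInverseOplax.

Section Seely.
Context {C : Category} {M : MonoidalData C} (HM : is_monoidal M)
  (P : Products C) (L : LECData M) (HL : is_linear_exponential_comonad L).

Notation B := (bang_f L).
Notation BB f := (fhom (bang_f L) f).
Ltac merge := repeat (rwl (tens_comp HM)).
Ltac fmerge := repeat (rwl (fhom_comp (bang_f L))).

Lemma sigma_delta X Y :
  sigma L (B X) (B Y) ∘ tensm M (delta L X) (delta L Y)
  = tensm M (delta L Y) (delta L X) ∘ sigma L X Y.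
Proof.
  unfold sigma. assocr. merge. rw (comonad_coassoc HL). rw (comonad_coassoc HL).
  rewrite (tens_comp HM (delta L X) (BB (delta L X)) (delta L Y) (BB (delta L Y))).
  assocr. rwl (lax_nat (bang_lax HL)). rw (d_nat HL). merge. fmerge. merge.
  rw (ax8_e HL). rw (ax8_e HL). clean.
  rwl (eps_nat HL). rwl (eps_nat HL). fmerge.
  rwl (lunit_nat HM). rwl (runit_nat HM). merge. clean.
  reflexivity.
Qed.

Lemma ee_sigma X Y :
  tensm M (ee L Y) (ee L X) ∘ sigma L X Y = tensm M (ee L X) (ee L Y).
Proof.
  (* Rewrite [e] as [e o delta] by (8); then [sigma] passes through [m] by (2)
     and is absorbed by [e] by naturality. *)
  assert (H : lunit M (munit M) ∘ (tensm M (ee L Y) (ee L X) ∘ sigma L X Y)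
              = lunit M (munit M) ∘ tensm M (ee L X) (ee L Y)).
  { rewrite <- (ax8_e HL Y), <- (ax8_e HL X), !(tens_comp HM). assocr.
    rwl sigma_delta. rwl (e_mon HL). rw (ax2 HL). rw (e_nat HL). rw (e_mon HL).
    reflexivity. }
  destruct (lunit_iso HM (munit M)) as [Hinv _].
  transitivity (lunit_inv M (munit M)
    ∘ (lunit M (munit M) ∘ (tensm M (ee L Y) (ee L X) ∘ sigma L X Y))).
  { rw Hinv. clean. reflexivity. }
  rewrite H. rw Hinv. clean. reflexivity.
Qed.

Definition derelict_pair X Y : hom (tens M (B X) (B Y)) (prod P X Y) :=
  pair P (eps L X ∘ runit M (B X) ∘ tensm M (idm (B X)) (ee L Y))
         (eps L Y ∘ lunit M (B Y) ∘ tensm M (ee L X) (idm (B Y))).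

Definition seely X Y : hom (tens M (B X) (B Y)) (B (prod P X Y)) :=
  BB (derelict_pair X Y) ∘ mm L (B X) (B Y) ∘ tensm M (delta L X) (delta L Y).

Definition seely_inv X Y : hom (B (prod P X Y)) (tens M (B X) (B Y)) :=
  tensm M (BB (p1 P X Y)) (BB (p2 P X Y)) ∘ dd L (prod P X Y).

Definition seely_unit : hom (munit M) (B (term P)) := BB (bang P (munit M)) ∘ mI L.

Lemma promote_derelict_fst X Y :
  BB (eps L X ∘ runit M (B X) ∘ tensm M (idm (B X)) (ee L Y)) ∘ mm L (B X) (B Y)
  ∘ tensm M (delta L X) (delta L Y) = runit M (B X) ∘ tensm M (idm (B X)) (ee L Y).
Proof.
  rewrite !fhom_comp. assocr. rw (lax_nat (bang_lax HL)). clean. merge. clean.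
  rwl (ax7_e HL).
  rewrite <- (comp_idl (delta L X)), (tens_comp HM), (tensm_split_lr HM _ _ _ _ (delta L X)).
  assocr. rw (lax_runit (bang_lax HL)). rw (runit_nat HM).
  rw (comonad_counit_r HL). clean. reflexivity.
Qed.

Lemma promote_derelict_snd X Y :
  BB (eps L Y ∘ lunit M (B Y) ∘ tensm M (ee L X) (idm (B Y))) ∘ mm L (B X) (B Y)
  ∘ tensm M (delta L X) (delta L Y) = lunit M (B Y) ∘ tensm M (ee L X) (idm (B Y)).
Proof.
  rewrite !fhom_comp. assocr. rw (lax_nat (bang_lax HL)). clean. merge. clean.
  rwl (ax7_e HL).
  rewrite <- (comp_idl (delta L Y)), (tens_comp HM), (tensm_split_rl HM _ _ _ _ _ (delta L Y)).
  assocr. rw (lax_lunit (bang_lax HL)). rw (lunit_nat HM).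
  rw (comonad_counit_r HL). clean. reflexivity.
Qed.

Lemma dd_promote X Y :
  dd L (tens M (B X) (B Y)) ∘ mm L (B X) (B Y) ∘ tensm M (delta L X) (delta L Y)
  = tensm M (mm L (B X) (B Y) ∘ tensm M (delta L X) (delta L Y))
            (mm L (B X) (B Y) ∘ tensm M (delta L X) (delta L Y))
    ∘ assoc_inv M (B X) (B Y) (tens M (B X) (B Y))
    ∘ tensm M (idm (B X)) (pre2 M (B Y) (sigma L X Y))
    ∘ assoc M (B X) (B X) (tens M (B Y) (B Y))
    ∘ tensm M (dd L X) (dd L Y).
Proof.
  assocr. rw (ax5 HL). unfold pairm, pre2. assocr. merge.
  rw (ax8_d HL). rw (ax8_d HL).
  rewrite (tens_comp HM (dd L X) (tensm M (delta L X) (delta L X))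
                        (dd L Y) (tensm M (delta L Y) (delta L Y))).
  assocr. rw (assoc_nat HM). merge. clean. rw (assoc_inv_nat HM). merge. clean.
  rw sigma_delta.
  rewrite (tensm_compl HM _ _ _ _ _ (tensm M (delta L Y) (delta L X)) (sigma L X Y)).
  assocr. rw (assoc_nat HM).
  rewrite (tensm_compr HM _ _ _ _ _ (delta L X)
             (tensm M (delta L Y) (tensm M (delta L X) (delta L Y)))).
  assocr. rw (assoc_inv_nat HM). merge. reflexivity.
Qed.

Lemma seely_inv_seely X Y : seely_inv X Y ∘ seely X Y = idm _.
Proof.
  unfold seely_inv, seely. assocr. rw (d_nat HL). merge. fmerge.
  unfold derelict_pair. rewrite (p1_pair P), (p2_pair P).
  rw dd_promote. merge. rw promote_derelict_fst. rw promote_derelict_snd.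
  unfold pre2.
  rewrite (tens_comp HM (tensm M (idm (B X)) (ee L Y)) (runit M (B X))
                        (tensm M (ee L X) (idm (B Y))) (lunit M (B Y))).
  assocr. rwl (assoc_inv_nat HM). merge. clean. rwl (assoc_nat HM). merge. clean.
  rw ee_sigma. rw (assoc_nat HM). rw (assoc_assoc_inv HM). clean.
  rwl (assoc_nat HM). rw (assoc_inv_assoc HM). merge. clean. merge.
  rw (comonoid_counit_r HL). rw (comonoid_counit_l HL). apply (tens_id HM).
Qed.

Lemma derelict_pair_seely_inv X Y :
  derelict_pair X Y ∘ seely_inv X Y = eps L (prod P X Y).
Proof.
  unfold seely_inv.
  apply prod_hom_ext; unfold derelict_pair; rewrite comp_assoc, ?p1_pair, ?p2_pair;
    assocr; merge; clean; rw (e_nat HL).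
  - rewrite (tensm_split_lr HM _ _ _ _ (BB (p1 P X Y))). assocr. rw (runit_nat HM).
    rw (comonoid_counit_r HL). clean. rw (eps_nat HL). reflexivity.
  - rewrite (tensm_split_rl HM _ _ _ _ (ee L (prod P X Y))). assocr. rw (lunit_nat HM).
    rw (comonoid_counit_l HL). clean. rw (eps_nat HL). reflexivity.
Qed.

Lemma seely_seely_inv X Y : seely X Y ∘ seely_inv X Y = idm _.
Proof.
  unfold seely, seely_inv. assocr. merge. rw (delta_nat HL). rw (delta_nat HL).
  rewrite (tens_comp HM (delta L (prod P X Y)) (BB (BB (p1 P X Y)))
                        (delta L (prod P X Y)) (BB (BB (p2 P X Y)))).
  assocr. rwl (lax_nat (bang_lax HL)). rw (ax7_d HL). fmerge.
  fold (seely_inv X Y). rewrite derelict_pair_seely_inv. apply (comonad_counit_r HL).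
Qed.

Lemma seely_inv_nat X X' Y Y' (f : hom X X') (g : hom Y Y') :
  seely_inv X' Y' ∘ BB (pair P (f ∘ p1 P X Y) (g ∘ p2 P X Y))
  = tensm M (BB f) (BB g) ∘ seely_inv X Y.
Proof.
  unfold seely_inv. assocr. rw (d_nat HL). merge. fmerge.
  rewrite p1_pair, p2_pair, !fhom_comp. reflexivity.
Qed.

Lemma seely_inv_lunit X :
  lunit M (B X) ∘ tensm M (ee L (term P)) (idm _) ∘ seely_inv (term P) X
  = BB (p2 P (term P) X).
Proof.
  unfold seely_inv. assocr. merge. clean. rw (e_nat HL).
  rewrite (tensm_split_rl HM _ _ _ _ (ee L (prod P (term P) X))). assocr.
  rw (lunit_nat HM). rw (comonoid_counit_l HL). clean. reflexivity.
Qed.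

Lemma seely_inv_runit X :
  runit M (B X) ∘ tensm M (idm _) (ee L (term P)) ∘ seely_inv X (term P)
  = BB (p1 P X (term P)).
Proof.
  unfold seely_inv. assocr. merge. clean. rw (e_nat HL).
  rewrite (tensm_split_lr HM _ _ _ _ (BB (p1 P X (term P)))). assocr.
  rw (runit_nat HM). rw (comonoid_counit_r HL). clean. reflexivity.
Qed.

Lemma seely_inv_assoc X Y Z :
  tensm M (idm _) (seely_inv Y Z) ∘ seely_inv X (prod P Y Z)
  ∘ BB (assoc (cartesian P) X Y Z)
  = assoc M (B X) (B Y) (B Z) ∘ tensm M (seely_inv X Y) (idm _)
    ∘ seely_inv (prod P X Y) Z.
Proof.
  unfold seely_inv; cbn [assoc cartesian].
  assocr. rw (d_nat HL). merge. fmerge. clean. rewrite p1_pair, p2_pair.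
  rw (d_nat HL). rw (d_nat HL). merge. fmerge. rewrite p1_pair, p2_pair.
  rewrite (tensm_compr HM _ _ _ _ _ (BB (p1 P X Y ∘ p1 P (prod P X Y) Z))),
          (tensm_compl HM _ _ _ _ _ (tensm M (BB (p1 P X Y ∘ p1 P (prod P X Y) Z))
                                             (BB (p2 P X Y ∘ p1 P (prod P X Y) Z)))).
  assocr. rw (assoc_nat HM). rw (comonoid_coassoc HL). rw (assoc_assoc_inv HM).
  clean. reflexivity.
Qed.

Lemma ee_seely_unit : ee L (term P) ∘ seely_unit = idm _.
Proof. unfold seely_unit. assocr. rw (e_nat HL). apply (e_mon_unit HL). Qed.

Lemma seely_unit_ee : seely_unit ∘ ee L (term P) = idm _.
Proof.
  unfold seely_unit. assocr. rw (ax7_e HL). fmerge.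
  assert (Hbang : bang P (munit M) ∘ ee L (term P) = eps L (term P)).
  { rewrite (bang_uniq (bang P (munit M) ∘ ee L (term P))). apply eq_sym, bang_uniq. }
  rewrite Hbang. apply (comonad_counit_r HL).
Qed.

End Seely.

Theorem proposition2 (C : Category) (M : MonoidalData C) (HM : is_monoidal M)
    (P : Products C) (L : LECData M) (HL : is_linear_exponential_comonad L) :
  exists (phi : forall X Y : C,
            hom (tens M (bang_f L X) (bang_f L Y)) (bang_f L (prod P X Y)))
         (phi0 : hom (munit M) (bang_f L (term P))),
    is_strong_monoidal (cartesian P) M (bang_f L) phi phi0.
Proof.
  exists (seely P L), (seely_unit P L). split; [| split].
  - apply (inverse_oplax_is_lax (cartesian P) M HM (bang_f L) _ (seely_inv P L) _
             (ee L (term P))).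
    + exact (seely_inv_seely HM P L HL).
    + exact (seely_seely_inv HM P L HL).
    + exact (ee_seely_unit P L HL).
    + exact (seely_inv_nat HM P L HL).
    + exact (seely_inv_assoc HM P L HL).
    + exact (seely_inv_lunit HM P L HL).
    + exact (seely_inv_runit HM P L HL).
  - intros X Y. exists (seely_inv P L X Y).
    split; [exact (seely_inv_seely HM P L HL X Y) | exact (seely_seely_inv HM P L HL X Y)].
  - exists (ee L (term P)).
    split; [exact (ee_seely_unit P L HL) | exact (seely_unit_ee P L HL)].
Qed.
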